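(* Let $G$ be a disconnected graph which has only finitely many non-trivial connected components, and such that for each connected component $H$ of $G$, every connected graph equimorphic to $H$ is isomorphic to $H$. Then either $G$ has infinitely many pairwise non-isomorphic disconnected siblings, or every sibling of $G$ is isomorphic to $G$.
   Context: Graphs are undirected and loopless. $G$ embeds into $G'$ if $G$ is isomorphic to an induced subgraph of $G'$; $G,G'$ are equimorphic if each embeds into the other; a sibling of $G$ is a graph equimorphic to $G$. A connected component is trivial if it consists of a single vertex. *)

From Stdlib Require Import List.

Record graph := Graph {
  vert :> Type;
  adj : vert -> vert -> Prop;
  adj_sym : forall x y, adj x y -> adj y x;
  adj_irrefl : forall x, ~ adj x x
}.

Definition embedding (G G' : graph) (f : vert G -> vert G') : Prop :=
  (forall x y, f x = f y -> x = y) /\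
  (forall x y, adj G x y <-> adj G' (f x) (f y)).

Definition embeds (G G' : graph) : Prop := exists f, embedding G G' f.

Definition isomorphic (G G' : graph) : Prop :=
  exists f, embedding G G' f /\ (forall y, exists x, f x = y).

Definition equimorphic (G G' : graph) : Prop := embeds G G' /\ embeds G' G.

Definition sibling (G' G : graph) : Prop := equimorphic G' G.

Inductive conn (G : graph) : vert G -> vert G -> Prop :=
| conn_refl : forall x, conn G x x
| conn_step : forall x y z, adj G x y -> conn G y z -> conn G x z.

Definition connected (G : graph) : Prop :=
  inhabited (vert G) /\ forall x y, conn G x y.

Definition disconnected (G : graph) : Prop := ~ connected G.

Definition comp_vert (G : graph) (v : vert G) : Type := { x : vert G | conn G v x }.

Definition comp_adj (G : graph) (v : vert G) (a b : comp_vert G v) : Prop :=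
  adj G (proj1_sig a) (proj1_sig b).

Lemma comp_adj_sym (G : graph) (v : vert G) :
  forall a b, comp_adj G v a b -> comp_adj G v b a.
Proof. intros a b; apply adj_sym. Qed.

Lemma comp_adj_irrefl (G : graph) (v : vert G) : forall a, ~ comp_adj G v a a.
Proof. intros a; apply adj_irrefl. Qed.

Definition component (G : graph) (v : vert G) : graph :=
  Graph (comp_vert G v) (comp_adj G v) (comp_adj_sym G v) (comp_adj_irrefl G v).

Definition nontrivial_comp (G : graph) (v : vert G) : Prop :=
  exists x, conn G v x /\ x <> v.

Definition fin_many_nontrivial_comps (G : graph) : Prop :=
  exists l : list (vert G),
    forall v, nontrivial_comp G v -> exists w, In w l /\ conn G w v.

(* Suppose [G] has no infinite family of pairwise non-isomorphic disconnected siblings.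
   Then the nontrivial part of [G] (its non-isolated vertices) cannot absorb, i.e. embed
   itself next to, a connected nontrivial graph [C]: otherwise the graphs [G + n C] would
   form such a family, told apart by their numbers of nontrivial components.  Likewise it
   cannot absorb [|I| + 1] isolated vertices, [I] the isolated vertices of [G]: otherwise
   it would, plus [n] isolated vertices, give such a family.

   Let [f : G -> G'] and [g : G' -> G] be embeddings.  By the first fact [g o f] permutes
   the finitely many nontrivial components of [G], and [f] meets every nontrivial component
   of [G'].  Following the cycles of that permutation, the component of [f w] in [G'] and
   the component of [w] in [G] embed into each other, so they are isomorphic by rigidity.
   By the second fact, and cardinal arithmetic ([k + k = k] for infinite [k], comparability
   and Cantor-Bernstein), [G] and [G'] have equally many isolated vertices.  Gluing these
   isomorphisms shows that [G'] is isomorphic to [G]. *)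

From Stdlib Require Import List Arith Lia Classical ClassicalEpsilon ProofIrrelevance FinFun.
From mathcomp Require classical_sets cardinality.
Import ListNotations.

(** * Injections between types *)

Definition injects (X Y : Type) : Prop := exists f : X -> Y, Injective f.
Definition equipotent (X Y : Type) : Prop := exists f : X -> Y, Bijective f.

Lemma proj1_sig_inj {A} {P : A -> Prop} : Injective (@proj1_sig A P).
Proof. intros a b. apply eq_sig_hprop. intros; apply proof_irrelevance. Qed.

Lemma injects_refl X : injects X X.
Proof. exists (fun x => x). intros a b e; exact e. Qed.

Lemma injects_trans X Y Z : injects X Y -> injects Y Z -> injects X Z.
Proof. intros [f hf] [g hg]. exists (fun x => g (f x)). intros a b e; auto. Qed.

Lemma injects_sum X1 X2 Y1 Y2 :
  injects X1 Y1 -> injects X2 Y2 -> injects (X1 + X2) (Y1 + Y2).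
Proof.
  intros [f hf] [g hg].
  exists (fun p => match p with inl x => inl (f x) | inr x => inr (g x) end).
  intros [a|a] [b|b] e; try discriminate; injection e as e; f_equal; auto.
Qed.

Lemma injects_of_rel X Y (R : X -> Y -> Prop) :
  (forall x, exists y, R x y) -> (forall x x' y, R x y -> R x' y -> x = x') -> injects X Y.
Proof.
  intros htot hinj. destruct (choice R htot) as [f hf].
  exists f. intros a b e. apply (hinj a b (f a)); [|rewrite e]; apply hf.
Qed.

Lemma injects_split I (A : I -> Prop) : injects I (sig A + sig (fun i => ~ A i)).
Proof.
  apply injects_of_rel with (fun i p => match p with
                                        | inl a => proj1_sig a = i
                                        | inr b => proj1_sig b = i end).
  - intro i. destruct (classic (A i)) as [h|h];
      [exists (inl (exist _ i h)) | exists (inr (exist _ i h))]; reflexivity.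
  - intros i i' [a|b] <- <-; reflexivity.
Qed.

Lemma finite_sum A B : Finite A -> Finite B -> Finite (A + B).
Proof.
  intros [la ha] [lb hb]. exists (map inl la ++ map inr lb).
  intros [a|b]; apply in_or_app; [left|right]; apply in_map; auto.
Qed.

Lemma finite_of_split X (A : X -> Prop) :
  Finite (sig A) -> Finite (sig (fun x => ~ A x)) -> Finite X.
Proof.
  intros [l1 h1] [l2 h2]. exists (map (@proj1_sig _ _) l1 ++ map (@proj1_sig _ _) l2).
  intro x. apply in_or_app. destruct (classic (A x)) as [h|h].
  - left. exact (in_map (@proj1_sig _ _) _ (exist _ x h) (h1 _)).
  - right. exact (in_map (@proj1_sig _ _) _ (exist _ x h) (h2 _)).
Qed.

Lemma finite_In {A} (r : list A) : Finite {x | In x r}.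
Proof.
  induction r as [|a r [l hl]].
  - exists []. intros [x []].
  - exists (exist _ a (in_eq a r)
              :: map (fun s => exist _ (proj1_sig s) (in_cons a _ r (proj2_sig s))) l).
    intros [x [<-|hx]]; [left; apply proj1_sig_inj; reflexivity|right].
    apply in_map_iff. exists (exist _ x hx). split; [apply proj1_sig_inj; reflexivity | apply hl].
Qed.

Lemma finite_injects_nat X : Finite X -> injects X nat.
Proof.
  intros [l hl]. apply injects_of_rel with (fun x n => nth_error l n = Some x).
  - intro x. apply In_nth_error, hl.
  - intros x x' n e e'. rewrite e in e'. injection e'; auto.
Qed.

Fixpoint fresh_prefix {X} (fresh : list X -> X) (n : nat) : list X :=
  match n with 0 => [] | S n => fresh (fresh_prefix fresh n) :: fresh_prefix fresh n end.

Lemma nat_injects_infinite X : ~ Finite X -> injects nat X.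
Proof.
  intro hinf.
  assert (hfresh : forall l : list X, exists x, ~ In x l).
  { intro l. apply NNPP. intro h. apply hinf. exists l. intro x.
    apply NNPP. intro hx. apply h. exists x; exact hx. }
  destruct (choice _ hfresh) as [fresh hf].
  set (u n := fresh (fresh_prefix fresh n)).
  assert (hin : forall m n, m < n -> In (u m) (fresh_prefix fresh n)).
  { intros m n; induction n as [|n IH]; intro hmn; [lia|].
    destruct (Nat.eq_dec m n) as [->|ne]; [left; reflexivity|right; apply IH; lia]. }
  exists u. intros m n e. destruct (Nat.lt_total m n) as [h|[h|h]]; auto; exfalso.
  - apply (hf (fresh_prefix fresh n)). fold (u n). rewrite <- e. apply hin, h.
  - apply (hf (fresh_prefix fresh m)). fold (u m). rewrite e. apply hin, h.
Qed.

Lemma finite_pigeonhole I (u : nat -> I) : Finite I -> exists a b, a < b /\ u a = u b.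
Proof.
  intros [l hl]. apply NNPP. intro hinj.
  assert (hnd : NoDup (map u (seq 0 (S (length l))))).
  { apply NoDup_map_NoDup_ForallPairs; [|apply seq_NoDup].
    intros a b _ _ e. destruct (Nat.lt_total a b) as [h|[h|h]]; auto; exfalso; apply hinj; eauto. }
  apply NoDup_incl_length with (l' := l) in hnd; [|intros x _; apply hl].
  rewrite length_map, length_seq in hnd. lia.
Qed.

(* With [p] a right inverse of [s], we have [s^k (p^k i) = i]; two of the [p^k i] coincide. *)
Lemma surjective_periodic I (s : I -> I) : Finite I -> Surjective s ->
  forall i, exists n, Nat.iter n s (s i) = i.
Proof.
  intros hfin hs i. destruct (choice (fun j k => s k = j) hs) as [p hp].
  set (u n := Nat.iter n p i).
  assert (hu : forall k, Nat.iter k s (u k) = i).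
  { induction k as [|k IH]; [reflexivity|].
    change (u (S k)) with (p (u k)). rewrite Nat.iter_succ_r, hp. exact IH. }
  destruct (finite_pigeonhole I u hfin) as [a [b [hab e]]].
  exists (b - S a). rewrite Nat.iter_swap, <- Nat.iter_succ.
  replace (S (b - S a)) with (b - a) by lia. rewrite <- (hu a) at 1. rewrite e, <- Nat.iter_add.
  replace (b - a + a) with b by lia. apply hu.
Qed.

Lemma equipotent_of_injects X Y : injects X Y -> injects Y X -> equipotent X Y.
Proof.
  assert (card_le : forall A B, injects A B ->
    cardinality.card_le (classical_sets.setT : classical_sets.set A)
                        (classical_sets.setT : classical_sets.set B) = true).
  { intros A B [f hf].
    rewrite <- (cardinality.card_le_eql
                  (cardinality.inj_card_eq (f := f) (fun a b _ _ => hf a b))).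
    apply cardinality.subset_card_le. intros b _. exact I. }
  intros hXY hYX.
  destruct (ssrbool.elimT cardinality.card_bijP
              (cardinality.Cantor_Bernstein (card_le X Y hXY) (card_le Y X hYX)))
    as [phi [psi phiK psiK]].
  exists (fun x => proj1_sig (phi (exist _ x (classical_sets.mem_set I)))).
  exists (fun y => proj1_sig (psi (exist _ y (classical_sets.mem_set I)))).
  assert (eta : forall T (s : classical_sets.set_type (classical_sets.setT : classical_sets.set T))
                 p, exist _ (proj1_sig s) p = s) by (intros; apply proj1_sig_inj; reflexivity).
  split.
  - intro x. rewrite eta.
    exact (f_equal (@proj1_sig _ _) (phiK (exist _ x _))).
  - intro y. rewrite eta.
    exact (f_equal (@proj1_sig _ _) (psiK (exist _ y _))).
Qed.

Lemma zorn_subsets T (P : (T -> Prop) -> Prop) :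
  (forall F, (forall R, F R -> P R) -> classical_sets.total_on F classical_sets.subset ->
     P (classical_sets.bigcup F (fun R => R))) ->
  exists M, P M /\ forall R, P R -> (forall t, M t -> R t) -> forall t, R t -> M t.
Proof.
  intro hchain.
  destruct (classical_sets.Zorn_bigcup hchain) as [M [hM hmax]].
  exists M. split; [exact hM|]. intros R hR hMR t ht. apply NNPP. intro hnt.
  apply (hmax R); [split; [exact hMR|] | exact hR]. intro hRM. exact (hnt (hRM t ht)).
Qed.

Definition partial_injection {A B} (R : A * B -> Prop) : Prop :=
  (forall a b b', R (a, b) -> R (a, b') -> b = b') /\
  (forall a a' b, R (a, b) -> R (a', b) -> a = a').

Lemma chain_bigcup_pair {T} (F : (T -> Prop) -> Prop) s t :
  classical_sets.total_on F classical_sets.subset ->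
  classical_sets.bigcup F (fun R => R) s -> classical_sets.bigcup F (fun R => R) t ->
  exists2 R, F R & R s /\ R t.
Proof.
  intros hF [R hR hs] [S hS ht].
  destruct (hF R S hR hS) as [h|h]; [exists S | exists R]; auto.
Qed.

Lemma partial_injection_union {A B} (F : (A * B -> Prop) -> Prop) :
  (forall R, F R -> partial_injection R) -> classical_sets.total_on F classical_sets.subset ->
  partial_injection (classical_sets.bigcup F (fun R => R)).
Proof.
  intros hFP hF. split.
  - intros a b b' h h'. destruct (chain_bigcup_pair F _ _ hF h h') as [R hR [r r']].
    exact (proj1 (hFP R hR) a b b' r r').
  - intros a a' b h h'. destruct (chain_bigcup_pair F _ _ hF h h') as [R hR [r r']].
    exact (proj2 (hFP R hR) a a' b r r').
Qed.

Lemma injects_total X Y : injects X Y \/ injects Y X.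
Proof.
  destruct (zorn_subsets (X * Y) partial_injection) as [M [[Mfun Minj] Mmax]].
  { exact partial_injection_union. }
  destruct (classic (forall x, exists y, M (x, y))) as [hX|hX].
  { left. apply injects_of_rel with (fun x y => M (x, y)); [exact hX|].
    intros x x' y; apply Minj. }
  destruct (classic (forall y, exists x, M (x, y))) as [hY|hY].
  { right. apply injects_of_rel with (fun y x => M (x, y)); [exact hY|].
    intros y y' x; apply Mfun. }
  exfalso.
  destruct (not_all_ex_not _ _ hX) as [x0 hx0]. destruct (not_all_ex_not _ _ hY) as [y0 hy0].
  assert (hext : partial_injection (fun t => M t \/ t = (x0, y0))).
  { split.
    - intros a b b' [h|e] [h'|e'].
      + exact (Mfun a b b' h h').
      + injection e' as -> ->. exfalso; apply hx0; eauto.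
      + injection e as -> ->. exfalso; apply hx0; eauto.
      + congruence.
    - intros a a' b [h|e] [h'|e'].
      + exact (Minj a a' b h h').
      + injection e' as -> ->. exfalso; apply hy0; eauto.
      + injection e as -> ->. exfalso; apply hy0; eauto.
      + congruence. }
  apply hx0. exists y0. apply (Mmax _ hext (fun t ht => or_introl ht)). right; reflexivity.
Qed.

Section Doubling.
Variable X : Type.

Definition untag (p : X + X) : X := match p with inl x | inr x => x end.

Definition doubled (R : (X + X) * X -> Prop) (x : X) : Prop := exists y, R (inl x, y).

(* [R] is an injection of [S + S] into [S], where [S] is the set of [doubled R] points. *)
Definition doubling (R : (X + X) * X -> Prop) : Prop :=
  partial_injection R /\
  (forall x, (exists y, R (inr x, y)) <-> doubled R x) /\
  (forall p y, R (p, y) -> doubled R y).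

Lemma doubling_source R p y : doubling R -> R (p, y) -> doubled R (untag p).
Proof. intros [_ [hdom _]] h. destruct p as [x|x]; [exists y; exact h | apply hdom; eauto]. Qed.

Lemma doubling_bigcup F :
  (forall R, F R -> doubling R) -> classical_sets.total_on F classical_sets.subset ->
  doubling (classical_sets.bigcup F (fun R => R)).
Proof.
  intros hFP hF. split; [|split].
  - apply partial_injection_union; [intros R hR; exact (proj1 (hFP R hR)) | exact hF].
  - intro x. split.
    + intros [y [R hR h]]. destruct (hFP R hR) as [_ [hdom _]].
      destruct (proj1 (hdom x) (ex_intro _ y h)) as [y' h']. exists y', R; assumption.
    + intros [y [R hR h]]. destruct (hFP R hR) as [_ [hdom _]].
      destruct (proj2 (hdom x) (ex_intro _ y h)) as [y' h']. exists y', R; assumption.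
  - intros p y [R hR h]. destruct (hFP R hR) as [_ [_ hrng]].
    destruct (hrng p y h) as [y' h']. exists y', R; assumption.
Qed.

Lemma doubling_disjoint_union R1 R2 :
  doubling R1 -> doubling R2 -> (forall x, doubled R1 x -> doubled R2 x -> False) ->
  doubling (fun t => R1 t \/ R2 t).
Proof.
  intros h1 h2 hdisj.
  pose proof h1 as [[fun1 inj1] [dom1 rng1]]. pose proof h2 as [[fun2 inj2] [dom2 rng2]].
  split; [split|split].
  - intros p y y' [r|r] [r'|r'].
    + exact (fun1 _ _ _ r r').
    + exfalso. exact (hdisj _ (doubling_source _ _ _ h1 r) (doubling_source _ _ _ h2 r')).
    + exfalso. exact (hdisj _ (doubling_source _ _ _ h1 r') (doubling_source _ _ _ h2 r)).
    + exact (fun2 _ _ _ r r').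
  - intros p p' y [r|r] [r'|r'].
    + exact (inj1 _ _ _ r r').
    + exfalso. exact (hdisj _ (rng1 _ _ r) (rng2 _ _ r')).
    + exfalso. exact (hdisj _ (rng1 _ _ r') (rng2 _ _ r)).
    + exact (inj2 _ _ _ r r').
  - intro x. split.
    + intros [y [r|r]]; [destruct (proj1 (dom1 x) (ex_intro _ y r)) as [y' r'] |
                         destruct (proj1 (dom2 x) (ex_intro _ y r)) as [y' r']]; exists y'; auto.
    + intros [y [r|r]]; [destruct (proj2 (dom1 x) (ex_intro _ y r)) as [y' r'] |
                         destruct (proj2 (dom2 x) (ex_intro _ y r)) as [y' r']]; exists y'; auto.
  - intros p y [r|r]; [destruct (rng1 p y r) as [y' r'] | destruct (rng2 p y r) as [y' r']];
      exists y'; auto.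
Qed.

Definition sequence_doubling (k : nat -> X) (t : (X + X) * X) : Prop :=
  exists n, t = (inl (k n), k (2 * n)) \/ t = (inr (k n), k (2 * n + 1)).

Lemma doubled_sequence k x : doubled (sequence_doubling k) x <-> exists n, x = k n.
Proof.
  split.
  - intros [y [n [e|e]]]; inversion e; eauto.
  - intros [n ->]. exists (k (2 * n)), n. left; reflexivity.
Qed.

Lemma doubling_sequence k : Injective k -> doubling (sequence_doubling k).
Proof.
  intro hk. split; [split|split].
  - intros p y y' [n [e|e]] [m [e'|e']]; inversion e; inversion e'; subst; try discriminate;
      match goal with h : _ = _ |- _ => injection h as h; apply hk in h; subst; reflexivity end.
  - intros p p' y [n [e|e]] [m [e'|e']]; inversion e; inversion e'; subst;
      match goal with h : k _ = k _ |- _ => apply hk in h end; try lia;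
      replace m with n by lia; reflexivity.
  - intro x. rewrite doubled_sequence. split.
    + intros [y [n [e|e]]]; inversion e; eauto.
    + intros [n ->]. exists (k (2 * n + 1)), n. right; reflexivity.
  - intros p y [n [e|e]]; inversion e; apply doubled_sequence; eauto.
Qed.

Lemma maximal_doubling_cofinite M :
  doubling M -> (forall R, doubling R -> (forall t, M t -> R t) -> forall t, R t -> M t) ->
  Finite {x | ~ doubled M x}.
Proof.
  intros hM hmax. apply NNPP. intro hinf.
  destruct (nat_injects_infinite _ hinf) as [k hk].
  set (k' n := proj1_sig (k n)).
  assert (hk' : Injective k') by (intros a b e; apply hk, proj1_sig_inj, e).
  assert (hext : doubling (fun t => M t \/ sequence_doubling k' t)).
  { apply doubling_disjoint_union; [exact hM | apply doubling_sequence, hk' |].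
    intros x hx hseq. apply doubled_sequence in hseq. destruct hseq as [n ->].
    exact (proj2_sig (k n) hx). }
  apply (proj2_sig (k 0)). exists (k' 0).
  apply (hmax _ hext (fun t ht => or_introl ht)). right. exists 0. left; reflexivity.
Qed.

Lemma doubling_injects R :
  doubling R -> injects ({x | doubled R x} + {x | doubled R x}) {x | doubled R x}.
Proof.
  intros [[Rfun Rinj] [Rdom Rrng]].
  apply injects_of_rel with
    (fun p s => R (match p with inl a => inl (proj1_sig a) | inr a => inr (proj1_sig a) end,
                   proj1_sig s)).
  - intros [[x hx]|[x hx]]; simpl.
    + destruct hx as [y h]. exists (exist _ y (Rrng _ _ h)). exact h.
    + destruct (proj2 (Rdom x) hx) as [y h]. exists (exist _ y (Rrng _ _ h)). exact h.
  - intros [a|a] [b|b] s h h'; pose proof (Rinj _ _ _ h h') as e; try discriminate;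
      injection e as e; f_equal; apply proj1_sig_inj, e.
Qed.

(* For a maximal doubling [M], [X] splits into [S], with [S + S] injecting into [S], and a
   finite rest [T]; then [T + T] also injects into the infinite [S]. *)
Lemma sum_self_injects : ~ Finite X -> injects (X + X) X.
Proof.
  intro hinf.
  destruct (zorn_subsets _ doubling doubling_bigcup) as [M [hM hmax]].
  set (S := {x | doubled M x}). set (T := {x | ~ doubled M x}).
  assert (hT : Finite T) by exact (maximal_doubling_cofinite M hM hmax).
  assert (hS : ~ Finite S) by (intro hS; exact (hinf (finite_of_split X _ hS hT))).
  assert (hSS : injects (S + S) S) by exact (doubling_injects M hM).
  assert (hTT : injects (T + T) S).
  { apply injects_trans with nat.
    - apply finite_injects_nat, finite_sum; exact hT.
    - apply nat_injects_infinite, hS. }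
  apply injects_trans with ((S + T) + (S + T))%type.
  { apply injects_sum; apply injects_split. }
  apply injects_trans with ((S + S) + (T + T))%type.
  { exists (fun u => match u with
                     | inl (inl s) => inl (inl s) | inl (inr t) => inr (inl t)
                     | inr (inl s) => inl (inr s) | inr (inr t) => inr (inr t) end).
    intros [[a|a]|[a|a]] [[b|b]|[b|b]] e; try discriminate; injection e as e; congruence. }
  apply injects_trans with (S + S)%type.
  { apply injects_sum; [exact hSS | exact hTT]. }
  apply injects_trans with S; [exact hSS|].
  exists (@proj1_sig _ _). apply proj1_sig_inj.
Qed.
End Doubling.

Section SumClosedClass.
Variable P : Type -> Prop.
Hypothesis P_injects : forall Z Z', injects Z' Z -> P Z -> P Z'.
Hypothesis P_sum : forall Z1 Z2, P Z1 -> P Z2 -> P (Z1 + Z2).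

Lemma sum_closed_finite Z : P unit -> Finite Z -> P Z.
Proof.
  intros hunit [l hl].
  apply (P_injects {z | In z l}).
  { exists (fun z => exist _ z (hl z)). intros a b e. exact (f_equal (@proj1_sig _ _) e). }
  clear hl. induction l as [|a l IH].
  - apply (P_injects unit); [|exact hunit]. exists (fun _ => tt). intros [z []].
  - apply (P_injects (unit + {z | In z l})); [|apply P_sum; assumption].
    apply injects_of_rel with (fun z u => match u with
                                          | inl _ => proj1_sig z = a
                                          | inr z' => proj1_sig z' = proj1_sig z end).
    + intros [z [->|hz]]; [exists (inl tt) | exists (inr (exist _ z hz))]; reflexivity.
    + intros z z' [[]|w] h h'; apply proj1_sig_inj; congruence.
Qed.

(* With [B] the rest of [I]: if [B] injects into [sig A], then [P] contains [I + 1];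
   so [sig A] injects into [B], which is infinite (a finite [B] would again put [I + 1]
   in [P]), and then [I] injects into [B + B], hence into [B]. *)
Lemma injects_into_unabsorbed_part I (A : I -> Prop) :
  P (sig A) -> ~ P (I + unit) -> injects I (sig (fun i => ~ A i)).
Proof.
  intros hA hI. set (B := sig (fun i => ~ A i)).
  destruct (classic (exists i, A i)) as [[i0 hi0]|hnone].
  2:{ exists (fun i => exist (fun i => ~ A i) i (fun h => hnone (ex_intro _ i h))).
      intros a b e. exact (f_equal (@proj1_sig _ _) e). }
  assert (hunit : P unit).
  { apply (P_injects (sig A)); [|exact hA].
    exists (fun _ => exist _ i0 hi0). intros [] []; reflexivity. }
  assert (hI1 : injects (I + unit) ((sig A + B) + unit)).
  { apply injects_sum; [apply injects_split | apply injects_refl]. }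
  destruct (injects_total B (sig A)) as [hBA|hAB].
  { exfalso. apply hI. apply (P_injects _ _ hI1). apply P_sum; [apply P_sum|]; auto.
    apply (P_injects _ _ hBA hA). }
  destruct (classic (Finite B)) as [hB|hB].
  { exfalso. apply hI. apply (P_injects _ _ hI1). apply P_sum; [apply P_sum|]; auto;
      apply sum_closed_finite; auto. }
  apply injects_trans with (sig A + B)%type; [apply injects_split|].
  apply injects_trans with (B + B)%type; [apply injects_sum; [exact hAB | apply injects_refl]|].
  apply sum_self_injects, hB.
Qed.
End SumClosedClass.

(** * Graphs, embeddings and components *)

Definition non_isolated (G : graph) (x : vert G) : Prop := exists y, adj G x y.

Definition isolated_vert (G : graph) : Type := {x : vert G | ~ non_isolated G x}.

Lemma conn_of_adj G x y : adj G x y -> conn G x y.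
Proof. intro h. exact (conn_step G x y y h (conn_refl G y)). Qed.

Lemma conn_trans G x y z : conn G x y -> conn G y z -> conn G x z.
Proof.
  induction 1 as [|x w y h _ IH]; intro hz; [exact hz | exact (conn_step G x w z h (IH hz))].
Qed.

Lemma conn_sym G x y : conn G x y -> conn G y x.
Proof.
  induction 1 as [x|x w y h _ IH]; [apply conn_refl|].
  exact (conn_trans G y w x IH (conn_of_adj G w x (adj_sym G x w h))).
Qed.

Lemma isolated_conn G x y : ~ non_isolated G x -> conn G x y -> x = y.
Proof.
  intros hx c. revert hx. destruct c as [|x w y h _]; intro hx; [reflexivity|].
  exfalso. apply hx. exists w. exact h.
Qed.

Lemma non_isolated_conn G x y : non_isolated G x -> conn G x y -> non_isolated G y.
Proof.
  intros hx hxy. apply NNPP. intro hy.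
  rewrite (isolated_conn G y x hy (conn_sym G x y hxy)) in hy. exact (hy hx).
Qed.

Lemma nontrivial_comp_of_non_isolated G v : non_isolated G v -> nontrivial_comp G v.
Proof.
  intros [y hy]. exists y. split; [apply conn_of_adj, hy|].
  intros ->. exact (adj_irrefl G v hy).
Qed.

Lemma embedding_id G : embedding G G (fun x => x).
Proof. split; [intros x y e; exact e | tauto]. Qed.

Lemma embedding_comp G H K f g :
  embedding G H f -> embedding H K g -> embedding G K (fun x => g (f x)).
Proof.
  intros [fi fa] [gi ga]. split; [intros x y e; auto|]. intros x y. rewrite fa. apply ga.
Qed.

Lemma embeds_refl G : embeds G G.
Proof. exists (fun x => x). apply embedding_id. Qed.

Lemma embeds_trans G H K : embeds G H -> embeds H K -> embeds G K.
Proof. intros [f hf] [g hg]. exists (fun x => g (f x)). eapply embedding_comp; eauto. Qed.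

Lemma conn_embedding G H e x y : embedding G H e -> conn G x y -> conn H (e x) (e y).
Proof.
  intros [_ ea]. induction 1 as [|x w y h _ IH]; [apply conn_refl|].
  apply conn_step with (e w); [apply ea, h | exact IH].
Qed.

Lemma non_isolated_embedding G H e x : embedding G H e -> non_isolated G x -> non_isolated H (e x).
Proof. intros [_ ea] [y hy]. exists (e y). apply ea, hy. Qed.

Lemma conn_isomorphism G H f x y :
  embedding G H f -> Surjective f -> conn H (f x) (f y) -> conn G x y.
Proof.
  intros [fi fa] fs.
  assert (key : forall u v, conn H u v -> forall a b, u = f a -> v = f b -> conn G a b).
  { induction 1 as [u|u w v h _ IH]; intros a b -> e.
    - rewrite (fi a b e). apply conn_refl.
    - destruct (fs w) as [z <-]. apply conn_step with z; [apply fa, h | exact (IH z b eq_refl e)]. }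
  intro h. exact (key _ _ h x y eq_refl eq_refl).
Qed.

Lemma non_isolated_isomorphism G H f x :
  embedding G H f -> Surjective f -> non_isolated H (f x) <-> non_isolated G x.
Proof.
  intros hf fs. split; [|apply non_isolated_embedding, hf].
  intros [y hy]. destruct (fs y) as [z <-]. exists z. apply (proj2 hf), hy.
Qed.

Lemma isomorphic_sym G H : isomorphic G H -> isomorphic H G.
Proof.
  intros [f [[fi fa] fs]]. destruct (choice _ fs) as [g hg].
  exists g. split; [split|].
  - intros a b e. rewrite <- (hg a), <- (hg b), e. reflexivity.
  - intros a b. rewrite (fa (g a) (g b)), !hg. reflexivity.
  - intro x. exists (f x). apply fi, hg.
Qed.

Lemma embeds_of_isomorphic G H : isomorphic G H -> embeds G H.
Proof. intros [f [hf _]]. exists f. exact hf. Qed.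

Definition union_adj (A B : graph) (u v : vert A + vert B) : Prop :=
  match u, v with
  | inl a, inl a' => adj A a a'
  | inr b, inr b' => adj B b b'
  | _, _ => False
  end.

Lemma union_adj_sym A B u v : union_adj A B u v -> union_adj A B v u.
Proof. destruct u, v; simpl; auto; apply adj_sym. Qed.

Lemma union_adj_irrefl A B u : ~ union_adj A B u u.
Proof. destruct u; apply adj_irrefl. Qed.

Definition disjoint_union (A B : graph) : graph :=
  Graph (vert A + vert B) (union_adj A B) (union_adj_sym A B) (union_adj_irrefl A B).

Definition edgeless (Z : Type) : graph :=
  Graph Z (fun _ _ => False) (fun _ _ h => h) (fun _ h => h).

Definition induced_adj (G : graph) (P : vert G -> Prop) (a b : sig P) : Prop :=
  adj G (proj1_sig a) (proj1_sig b).

Lemma induced_adj_sym G P a b : induced_adj G P a b -> induced_adj G P b a.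
Proof. apply adj_sym. Qed.

Lemma induced_adj_irrefl G P a : ~ induced_adj G P a a.
Proof. apply adj_irrefl. Qed.

Definition induced (G : graph) (P : vert G -> Prop) : graph :=
  Graph (sig P) (induced_adj G P) (induced_adj_sym G P) (induced_adj_irrefl G P).

Definition nontrivial_part (G : graph) : graph := induced G (non_isolated G).

Lemma embedding_val G P : embedding (induced G P) G (@proj1_sig _ _).
Proof. split; [apply proj1_sig_inj | reflexivity]. Qed.

Lemma embedding_corestrict G H (P : vert H -> Prop) e (he : embedding G H e)
  (hP : forall x, P (e x)) : embedding G (induced H P) (fun x => exist P (e x) (hP x)).
Proof.
  destruct he as [ei ea]. split; [|exact ea].
  intros x y exy. exact (ei x y (f_equal (@proj1_sig _ _) exy)).
Qed.

Lemma embeds_nontrivial_part A G e :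
  embedding A G e -> (forall a, non_isolated G (e a)) -> embeds A (nontrivial_part G).
Proof. intros he hne. eexists. exact (embedding_corestrict A G _ e he hne). Qed.

Lemma nontrivial_part_no_isolated G (s : vert (nontrivial_part G)) :
  non_isolated (nontrivial_part G) s.
Proof.
  destruct s as [x [y hxy]].
  exists (exist _ y (ex_intro _ x (adj_sym G x y hxy))). exact hxy.
Qed.

Lemma embedding_disjoint_union A B X a b :
  embedding A X a -> embedding B X b ->
  (forall x y, a x <> b y /\ ~ adj X (a x) (b y)) ->
  embedding (disjoint_union A B) X (fun u => match u with inl x => a x | inr y => b y end).
Proof.
  intros [ai aa] [bi ba] hsep. split.
  - intros [x1|y1] [x2|y2] e.
    + f_equal; auto.
    + exfalso; exact (proj1 (hsep x1 y2) e).
    + exfalso; exact (proj1 (hsep x2 y1) (eq_sym e)).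
    + f_equal; auto.
  - intros [x1|y1] [x2|y2]; simpl; auto.
    + split; [tauto|]. apply hsep.
    + split; [tauto|]. intro h. apply (proj2 (hsep x2 y1)), adj_sym, h.
Qed.

Lemma embedding_inl A B : embedding A (disjoint_union A B) inl.
Proof. split; [intros a a' e; injection e; auto | reflexivity]. Qed.

Lemma embedding_inr A B : embedding B (disjoint_union A B) inr.
Proof. split; [intros b b' e; injection e; auto | reflexivity]. Qed.

Lemma embeds_disjoint_union A A' B B' :
  embeds A A' -> embeds B B' -> embeds (disjoint_union A B) (disjoint_union A' B').
Proof.
  intros [f hf] [g hg]. eexists. apply embedding_disjoint_union.
  - exact (embedding_comp _ _ _ _ _ hf (embedding_inl A' B')).
  - exact (embedding_comp _ _ _ _ _ hg (embedding_inr A' B')).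
  - intros x y. simpl. split; [discriminate | tauto].
Qed.

Lemma embeds_disjoint_union_l A B : embeds A (disjoint_union A B).
Proof. exists inl. apply embedding_inl. Qed.

Lemma disjoint_union_swap A B C :
  embeds (disjoint_union (disjoint_union A B) C) (disjoint_union (disjoint_union A C) B).
Proof.
  exists (fun u => match u with
                   | inl (inl a) => inl (inl a) | inl (inr b) => inr b | inr c => inl (inr c) end).
  split.
  - intros [[a|b]|c] [[a'|b']|c'] e; try discriminate;
      injection e as e; try injection e as e; congruence.
  - intros [[a|b]|c] [[a'|b']|c']; reflexivity.
Qed.

Lemma embeds_edgeless Z Z' : injects Z' Z -> embeds (edgeless Z') (edgeless Z).
Proof. intros [f hf]. exists f. split; [exact hf | reflexivity]. Qed.

Definition union_conn (A B : graph) (u v : vert A + vert B) : Prop :=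
  match u, v with
  | inl a, inl a' => conn A a a'
  | inr b, inr b' => conn B b b'
  | _, _ => False
  end.

Lemma conn_disjoint_union A B u v : conn (disjoint_union A B) u v -> union_conn A B u v.
Proof.
  induction 1 as [[a|b]|[a|b] [a'|b'] v h _ IH]; simpl in *; try apply conn_refl; try contradiction;
    destruct v; try contradiction; eapply conn_step; eauto.
Qed.

Lemma disjoint_union_disconnected A B (a : vert A) (b : vert B) : disconnected (disjoint_union A B).
Proof. intros [_ hconn]. exact (conn_disjoint_union A B _ _ (hconn (inl a) (inr b))). Qed.

Lemma non_isolated_disjoint_union A B u :
  non_isolated (disjoint_union A B) u <->
  match u with inl a => non_isolated A a | inr b => non_isolated B b end.
Proof.
  destruct u as [a|b]; split.
  - intros [[a'|b'] h]; [exists a'; exact h | contradiction].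
  - intros [a' h]. exists (inl a'). exact h.
  - intros [[a'|b'] h]; [contradiction | exists b'; exact h].
  - intros [b' h]. exists (inr b'). exact h.
Qed.

Lemma isomorphic_split_isolated G :
  isomorphic (disjoint_union (nontrivial_part G) (edgeless (isolated_vert G))) G.
Proof.
  exists (fun u => match u with inl s => proj1_sig s | inr t => proj1_sig t end).
  split; [apply embedding_disjoint_union|].
  - apply embedding_val.
  - split; [apply proj1_sig_inj|]. intros [a ha] [b hb]. simpl. split; [tauto|].
    intro h. apply ha. exists b. exact h.
  - intros [a ha] [b hb]. simpl. split.
    + intros ->. exact (hb ha).
    + intro h. apply hb. exists a. apply adj_sym, h.
  - intro x. destruct (classic (non_isolated G x)) as [h|h].
    + exists (inl (exist _ x h)). reflexivity.
    + exists (inr (exist _ x h)). reflexivity.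
Qed.

Lemma component_connected G v : connected (component G v).
Proof.
  assert (hpath : forall a x (pa : conn G v a) (px : conn G v x), conn G a x ->
            conn (component G v) (exist _ a pa) (exist _ x px)).
  { intros a x pa px hax. revert pa px. induction hax as [a|a w x h _ IH]; intros pa px.
    - rewrite (proof_irrelevance _ pa px). apply conn_refl.
    - apply conn_step with (exist _ w (conn_trans G v a w pa (conn_of_adj G a w h))).
      + exact h.
      + apply IH. }
  split; [exact (inhabits (exist _ v (conn_refl G v)))|].
  intros [a pa] [x px]. apply hpath. exact (conn_trans G a v x (conn_sym G v a pa) px).
Qed.

Lemma non_isolated_component G v :
  non_isolated G v -> non_isolated (component G v) (exist _ v (conn_refl G v)).
Proof. intros [y hy]. exists (exist _ y (conn_of_adj G v y hy)). exact hy. Qed.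

Lemma embedding_component_val G v : embedding (component G v) G (@proj1_sig _ _).
Proof. split; [apply proj1_sig_inj | reflexivity]. Qed.

Lemma embeds_component G H e a b :
  embedding G H e -> conn H (e a) b -> embeds (component G a) (component H b).
Proof.
  intros he hab.
  assert (hto : forall x, conn G a x -> conn H b (e x)).
  { intros x hx.
    exact (conn_trans H b (e a) (e x) (conn_sym H _ _ hab) (conn_embedding G H e a x he hx)). }
  exists (fun s => exist _ (e (proj1_sig s)) (hto _ (proj2_sig s)) : vert (component H b)).
  destruct he as [ei ea]. split.
  - intros s t est. apply proj1_sig_inj, ei. exact (f_equal (@proj1_sig _ _) est).
  - intros s t. apply ea.
Qed.

Lemma embeds_iterate I (K : I -> graph) (s : I -> I) :
  (forall i, embeds (K i) (K (s i))) -> forall n i, embeds (K i) (K (Nat.iter n s i)).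
Proof.
  intros hs n i. induction n as [|n IH]; [apply embeds_refl|].
  exact (embeds_trans _ _ _ IH (hs _)).
Qed.

(** * Counting components *)

Record component_transversal (X : graph) (Q : vert X -> Prop) (r : list (vert X)) : Prop := {
  transversal_nodup : NoDup r;
  transversal_in : forall w, In w r -> Q w;
  transversal_sep : forall a b, In a r -> In b r -> conn X a b -> a = b;
  transversal_cover : forall v, Q v -> exists2 w, In w r & conn X w v
}.

Lemma transversal_length_le X Q r r' :
  component_transversal X Q r -> component_transversal X Q r' -> length r <= length r'.
Proof.
  intros hr hr'.
  destruct (choice (fun w w' => Q w -> In w' r' /\ conn X w' w)) as [rho hrho].
  { intro w. destruct (classic (Q w)) as [hw|hw].
    - destruct (transversal_cover _ _ _ hr' w hw) as [w' h1 h2]. exists w'. auto.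
    - exists w. tauto. }
  rewrite <- (length_map rho r). apply NoDup_incl_length.
  - apply Injective_map_NoDup_in; [|exact (transversal_nodup _ _ _ hr)].
    intros a b ha hb e.
    destruct (hrho a (transversal_in _ _ _ hr a ha)) as [_ ca].
    destruct (hrho b (transversal_in _ _ _ hr b hb)) as [_ cb].
    apply (transversal_sep _ _ _ hr a b ha hb). rewrite e in ca.
    exact (conn_trans X a (rho b) b (conn_sym X _ _ ca) cb).
  - intros w' hw'. apply in_map_iff in hw'. destruct hw' as [w [<- hw]].
    apply hrho, (transversal_in _ _ _ hr), hw.
Qed.

Lemma transversal_iff X Q Q' r :
  (forall x, Q x <-> Q' x) -> component_transversal X Q r -> component_transversal X Q' r.
Proof.
  intros hQ [hnd hin hsep hcov]. split; auto.
  - intros w hw. apply hQ, hin, hw.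
  - intros v hv. apply hcov, hQ, hv.
Qed.

Lemma transversal_isomorphism X Y f Q Q' r :
  embedding X Y f -> Surjective f -> (forall x, Q' (f x) <-> Q x) ->
  component_transversal X Q r -> component_transversal Y Q' (map f r).
Proof.
  intros hf fs hQ [hnd hin hsep hcov]. split.
  - apply Injective_map_NoDup; [exact (proj1 hf) | exact hnd].
  - intros y hy. apply in_map_iff in hy. destruct hy as [x [<- hx]]. apply hQ, hin, hx.
  - intros a b ha hb hab. apply in_map_iff in ha, hb.
    destruct ha as [x [<- hx]], hb as [x' [<- hx']].
    f_equal. apply hsep; auto. exact (conn_isomorphism X Y f x x' hf fs hab).
  - intros y hy. destruct (fs y) as [x <-]. destruct (hcov x (proj1 (hQ x) hy)) as [w hw hwx].
    exists (f w); [apply in_map, hw | apply (conn_embedding X Y f w x hf hwx)].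
Qed.

Definition covered_by X (Q : vert X -> Prop) (l : list (vert X)) (v : vert X) : Prop :=
  Q v /\ exists2 w, In w l & conn X w v.

Lemma transversal_covered_cons X (Q : vert X -> Prop) l a r :
  (forall x y, Q x -> conn X x y -> Q y) -> component_transversal X (covered_by X Q l) r ->
  exists r', component_transversal X (covered_by X Q (a :: l)) r'.
Proof.
  intros hQ [hnd hin hsep hcov].
  assert (hin' : forall w, In w r -> covered_by X Q (a :: l) w).
  { intros w hw. destruct (hin w hw) as [hQw [u hu huw]].
    split; [exact hQw|]. exists u; [right|]; assumption. }
  destruct (classic (Q a /\ forall w, In w r -> ~ conn X a w)) as [[hQa hnew]|hold].
  - exists (a :: r). split.
    + constructor; [intro h; exact (hnew a h (conn_refl X a)) | exact hnd].
    + intros w [<-|hw]; [|exact (hin' w hw)].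
      split; [exact hQa | exists a; [left; reflexivity | apply conn_refl]].
    + intros b c [<-|hb] [<-|hc] hbc; auto.
      * exfalso. exact (hnew c hc hbc).
      * exfalso. exact (hnew b hb (conn_sym X _ _ hbc)).
    + intros v [hQv [u [<-|hu] huv]]; [exists a; [left; reflexivity | exact huv]|].
      destruct (hcov v (conj hQv (ex_intro2 _ _ u hu huv))) as [w hw hwv].
      exists w; [right|]; assumption.
  - exists r. split; auto.
    intros v [hQv [u [<-|hu] huv]]; [|apply hcov; split; [exact hQv | exists u; assumption]].
    destruct (classic (exists2 w, In w r & conn X a w)) as [[w hw haw]|hnone].
    + exists w; [exact hw|]. exact (conn_trans X w a v (conn_sym X _ _ haw) huv).
    + exfalso. apply hold. split; [exact (hQ v a hQv (conn_sym X _ _ huv))|].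
      intros w hw haw. exact (hnone (ex_intro2 _ _ w hw haw)).
Qed.

Lemma transversal_exists X (Q : vert X -> Prop) (l : list (vert X)) :
  (forall x y, Q x -> conn X x y -> Q y) -> (forall v, Q v -> exists2 w, In w l & conn X w v) ->
  exists r, component_transversal X Q r.
Proof.
  intros hQ hl.
  assert (hgen : exists r, component_transversal X (covered_by X Q l) r).
  { clear hl. induction l as [|a l [r hr]].
    - exists []. split; [constructor | contradiction | contradiction |]. intros v [_ [w []]].
    - exact (transversal_covered_cons X Q l a r hQ hr). }
  destruct hgen as [r hr]. exists r. eapply transversal_iff; [|exact hr].
  intro v. split; [intros [hv _]; exact hv | intro hv; split; [exact hv | apply hl, hv]].
Qed.

Lemma transversal_add_copy X C (Q : vert X -> Prop) (Q' : vert (disjoint_union X C) -> Prop) r c0 :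
  connected C -> (forall u, Q' u <-> match u with inl x => Q x | inr _ => True end) ->
  component_transversal X Q r ->
  component_transversal (disjoint_union X C) Q' (inr c0 :: map inl r).
Proof.
  intros [_ hC] hQ' [hnd hin hsep hcov]. split.
  - constructor.
    + intro h. apply in_map_iff in h. destruct h as [x [e _]]. discriminate.
    + apply Injective_map_NoDup; [intros a b e; injection e; auto | exact hnd].
  - intros u [<-|hu]; apply hQ'; [exact I|].
    apply in_map_iff in hu. destruct hu as [x [<- hx]]. apply hin, hx.
  - intros u v hu hv huv. pose proof (conn_disjoint_union X C u v huv) as h.
    destruct hu as [<-|hu], hv as [<-|hv]; auto;
      try (apply in_map_iff in hu; destruct hu as [x [<- hx]]);
      try (apply in_map_iff in hv; destruct hv as [y [<- hy]]); try contradiction.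
    f_equal. exact (hsep x y hx hy h).
  - intros [x|c] hu; apply hQ' in hu.
    + destruct (hcov x hu) as [w hw hwx]. exists (inl w); [right; apply in_map, hw|].
      exact (conn_embedding X _ _ w x (embedding_inl X C) hwx).
    + exists (inr c0); [left; reflexivity|].
      exact (conn_embedding C _ _ c0 c (embedding_inr X C) (hC c0 c)).
Qed.

Definition comp_count (Q : forall Y : graph, vert Y -> Prop) (X : graph) (m : nat) : Prop :=
  exists r, component_transversal X (Q X) r /\ length r = m.

Definition iso_invariant (Q : forall Y : graph, vert Y -> Prop) : Prop :=
  forall X Y f, embedding X Y f -> Surjective f -> forall x, Q Y (f x) <-> Q X x.

Definition holds_on_added_copy (Q : forall Y : graph, vert Y -> Prop) (C : graph) : Prop :=
  forall Y u, Q (disjoint_union Y C) u <-> match u with inl y => Q Y y | inr _ => True end.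

Lemma comp_count_unique Q X m m' : comp_count Q X m -> comp_count Q X m' -> m = m'.
Proof.
  intros [r [hr <-]] [r' [hr' <-]].
  apply Nat.le_antisymm; apply transversal_length_le with (X := X) (Q := Q X); assumption.
Qed.

Lemma comp_count_isomorphic Q X Y m :
  iso_invariant Q -> isomorphic X Y -> comp_count Q X m -> comp_count Q Y m.
Proof.
  intros hQ [f [hf fs]] [r [hr <-]]. exists (map f r). split; [|apply length_map].
  exact (transversal_isomorphism X Y f _ _ r hf fs (hQ X Y f hf fs) hr).
Qed.

Fixpoint add_copies (X C : graph) (n : nat) : graph :=
  match n with 0 => X | S n => disjoint_union (add_copies X C n) C end.

Lemma add_copies_embeds X C n : embeds (disjoint_union X C) X -> embeds (add_copies X C n) X.
Proof.
  intro hXC. induction n as [|n IH]; [apply embeds_refl|].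
  apply embeds_trans with (disjoint_union X C); [|exact hXC].
  apply embeds_disjoint_union; [exact IH | apply embeds_refl].
Qed.

Lemma embeds_add_copies X C n : embeds X (add_copies X C n).
Proof.
  induction n as [|n IH]; [apply embeds_refl|].
  exact (embeds_trans _ _ _ IH (embeds_disjoint_union_l _ C)).
Qed.

Lemma comp_count_add_copies Q X C m :
  connected C -> holds_on_added_copy Q C ->
  comp_count Q X m -> forall n, comp_count Q (add_copies X C n) (m + n).
Proof.
  intros hC hQ hX n. destruct (proj1 hC) as [c0].
  induction n as [|n [r [hr hlen]]]; [rewrite Nat.add_0_r; exact hX|].
  exists (inr c0 :: map inl r). split.
  - exact (transversal_add_copy _ C _ _ r c0 hC (hQ _) hr).
  - simpl. rewrite length_map, hlen. lia.
Qed.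

Definition many_disconnected_siblings (G : graph) : Prop :=
  exists F : nat -> graph,
    (forall n, sibling (F n) G /\ disconnected (F n)) /\
    (forall i j, i <> j -> ~ isomorphic (F i) (F j)).

Lemma many_siblings_of_add_copies G X C Q :
  connected C -> holds_on_added_copy Q C -> iso_invariant Q -> (exists m, comp_count Q X m) ->
  embeds G X -> embeds X G -> embeds (disjoint_union X C) X -> many_disconnected_siblings G.
Proof.
  intros hC hQ hiso [m hm] hGX hXG hXC. destruct (proj1 hC) as [c0].
  exists (fun n => add_copies X C (S (S n))). split.
  - intro n. split; [split|].
    + exact (embeds_trans _ _ _ (add_copies_embeds X C _ hXC) hXG).
    + exact (embeds_trans _ _ _ hGX (embeds_add_copies X C _)).
    + exact (disjoint_union_disconnected (add_copies X C (S n)) C (inr c0) c0).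
  - intros i j hij hFij. apply hij.
    pose proof (comp_count_add_copies Q X C m hC hQ hm) as hcount.
    pose proof (comp_count_isomorphic Q _ _ _ hiso hFij (hcount (S (S i)))) as hi.
    pose proof (comp_count_unique Q _ _ _ hi (hcount (S (S j)))). lia.
Qed.

(** * Absorption by the nontrivial part *)

Definition absorbs (G H : graph) : Prop :=
  embeds (disjoint_union (nontrivial_part G) H) (nontrivial_part G).

Lemma absorbs_embeds G H : absorbs G H -> embeds (disjoint_union G H) G.
Proof.
  intro hGH. set (I := edgeless (isolated_vert G)).
  pose proof (isomorphic_split_isolated G) as hsplit.
  apply embeds_trans with (disjoint_union (disjoint_union (nontrivial_part G) I) H).
  { apply embeds_disjoint_union; [|apply embeds_refl].
    apply embeds_of_isomorphic, isomorphic_sym, hsplit. }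
  apply embeds_trans with (disjoint_union (disjoint_union (nontrivial_part G) H) I);
    [apply disjoint_union_swap|].
  apply embeds_trans with (disjoint_union (nontrivial_part G) I);
    [apply embeds_disjoint_union; [exact hGH | apply embeds_refl]|].
  apply embeds_of_isomorphic, hsplit.
Qed.

Lemma absorbs_edgeless_injects G Z Z' :
  injects Z' Z -> absorbs G (edgeless Z) -> absorbs G (edgeless Z').
Proof.
  intros hZ hG. refine (embeds_trans _ _ _ _ hG).
  apply embeds_disjoint_union; [apply embeds_refl | apply embeds_edgeless, hZ].
Qed.

Lemma absorbs_edgeless_sum G Z1 Z2 :
  absorbs G (edgeless Z1) -> absorbs G (edgeless Z2) -> absorbs G (edgeless (Z1 + Z2)).
Proof.
  intros h1 h2.
  apply embeds_trans with
    (disjoint_union (disjoint_union (nontrivial_part G) (edgeless Z1)) (edgeless Z2)).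
  - exists (fun u => match u with
                     | inl x => inl (inl x)
                     | inr (inl z) => inl (inr z)
                     | inr (inr z) => inr z end).
    split.
    + intros [x|[z|z]] [x'|[z'|z']] e; try discriminate; injection e as e; try injection e as e;
        congruence.
    + intros [x|[z|z]] [x'|[z'|z']]; reflexivity.
  - refine (embeds_trans _ _ _ _ h2).
    apply embeds_disjoint_union; [exact h1 | apply embeds_refl].
Qed.

Lemma absorbs_isolated_image G H a b Z (z : Z -> vert H) :
  embedding G H a -> embedding H G b -> Injective z ->
  (forall t, ~ non_isolated H (z t)) -> (forall t, non_isolated G (b (z t))) ->
  absorbs G (edgeless Z).
Proof.
  intros ha hb hz hiso hnb. eapply embeds_nontrivial_part; [apply embedding_disjoint_union|].
  - exact (embedding_comp _ _ _ _ _ (embedding_val G _) (embedding_comp _ _ _ _ _ ha hb)).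
  - split; [intros t t' e; exact (hz t t' (proj1 hb _ _ e))|].
    intros t t'. simpl. rewrite <- (proj2 hb). split; [tauto|].
    intro h. apply (hiso t). exists (z t'). exact h.
  - intros [x hx] t. simpl. rewrite <- (proj2 hb). split.
    + intro e. apply (proj1 hb) in e. apply (hiso t). rewrite <- e.
      exact (non_isolated_embedding _ _ _ x ha hx).
    + intro h. apply (hiso t). exists (a x). apply adj_sym, h.
  - intros [s|t]; [|apply hnb].
    exact (non_isolated_embedding _ _ _ _ hb (non_isolated_embedding _ _ _ _ ha (proj2_sig s))).
Qed.

Lemma absorbs_missed_component G G2 e e2 y :
  embedding G G2 e -> embedding G2 G e2 -> non_isolated G2 y ->
  (forall x, non_isolated G x -> ~ conn G2 (e x) y) -> absorbs G (component G2 y).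
Proof.
  intros he he2 hy hmiss. eapply embeds_nontrivial_part; [apply embedding_disjoint_union|].
  - exact (embedding_comp _ _ _ _ _ (embedding_val G _) (embedding_comp _ _ _ _ _ he he2)).
  - exact (embedding_comp _ _ _ _ _ (embedding_component_val G2 y) he2).
  - intros [x hx] [c hc]. simpl. rewrite <- (proj2 he2). split.
    + intro ec. apply (proj1 he2) in ec. apply (hmiss x hx). rewrite ec. apply conn_sym, hc.
    + intro h. apply (hmiss x hx).
      exact (conn_trans _ _ _ _ (conn_of_adj _ _ _ h) (conn_sym _ _ _ hc)).
  - intros [s|[c hc]].
    + exact (non_isolated_embedding _ _ _ _ he2 (non_isolated_embedding _ _ _ _ he (proj2_sig s))).
    + exact (non_isolated_embedding _ _ _ _ he2 (non_isolated_conn _ _ _ hy hc)).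
Qed.

(* An isolated vertex of [H] is either sent by [k] to an isolated vertex of [K], or it is
   absorbed by [G] through [b o k]. *)
Lemma isolated_injects G H K a k b :
  embedding G H a -> embedding H K k -> embedding K G b ->
  ~ absorbs G (edgeless (isolated_vert H + unit)) -> injects (isolated_vert H) (isolated_vert K).
Proof.
  intros ha hk hb hnot.
  set (A (t : isolated_vert H) := non_isolated K (k (proj1_sig t))).
  assert (hA : absorbs G (edgeless (sig A))).
  { apply (absorbs_isolated_image G H a (fun y => b (k y)) (sig A)
             (fun t => proj1_sig (proj1_sig t)) ha (embedding_comp _ _ _ _ _ hk hb)).
    - intros t t' e. apply proj1_sig_inj, proj1_sig_inj, e.
    - intro t. exact (proj2_sig (proj1_sig t)).
    - intro t. exact (non_isolated_embedding _ _ _ _ hb (proj2_sig t)). }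
  apply injects_trans with (sig (fun t => ~ A t)).
  - exact (injects_into_unabsorbed_part (fun Z => absorbs G (edgeless Z))
             (absorbs_edgeless_injects G) (absorbs_edgeless_sum G) _ A hA hnot).
  - exists (fun t : sig (fun t => ~ A t) =>
              exist _ (k (proj1_sig (proj1_sig t))) (proj2_sig t) : isolated_vert K).
    intros t t' e. apply proj1_sig_inj, proj1_sig_inj, (proj1 hk), (f_equal (@proj1_sig _ _) e).
Qed.

Lemma many_siblings_of_absorbed_component G C r :
  component_transversal G (non_isolated G) r -> connected C -> (exists c, non_isolated C c) ->
  absorbs G C -> many_disconnected_siblings G.
Proof.
  intros hr hC [c0 hc0] hGC. apply (many_siblings_of_add_copies G G C non_isolated hC).
  - intros Y u. rewrite non_isolated_disjoint_union. destruct u as [y|c]; [reflexivity|].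
    split; [tauto|]. intros _. exact (non_isolated_conn C c0 c hc0 (proj2 hC c0 c)).
  - intros X Y f hf fs x. exact (non_isolated_isomorphism X Y f x hf fs).
  - exists (length r), r. auto.
  - apply embeds_refl.
  - apply embeds_refl.
  - apply absorbs_embeds, hGC.
Qed.

Lemma many_siblings_of_absorbed_isolated G :
  absorbs G (edgeless (isolated_vert G + unit)) -> many_disconnected_siblings G.
Proof.
  intro habs.
  assert (hK1 : connected (edgeless unit)).
  { split; [exact (inhabits tt) | intros [] []; apply conn_refl]. }
  apply (many_siblings_of_add_copies G (nontrivial_part G) (edgeless unit)
           (fun Y y => ~ non_isolated Y y) hK1).
  - intros Y u. rewrite non_isolated_disjoint_union. destruct u as [y|c]; [reflexivity|].
    split; [tauto|]. intros _ [_ []].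
  - intros X Y f hf fs x. rewrite (non_isolated_isomorphism X Y f x hf fs). reflexivity.
  - exists 0, []. split; [|reflexivity]. split; [constructor | contradiction | contradiction |].
    intros v hv. exfalso. exact (hv (nontrivial_part_no_isolated G v)).
  - apply embeds_trans with (disjoint_union (nontrivial_part G) (edgeless (isolated_vert G))).
    + apply embeds_of_isomorphic, isomorphic_sym, isomorphic_split_isolated.
    + refine (absorbs_edgeless_injects G _ _ _ habs). exists inl. intros a b e; injection e; auto.
  - exists (@proj1_sig _ _). apply embedding_val.
  - refine (absorbs_edgeless_injects G _ _ _ habs). exists inr. intros a b e; injection e; auto.
Qed.

(** * Gluing isomorphisms of components *)

Record component_index (X : graph) (I : Type) (c : I -> vert X) : Prop := {
  index_non_isolated : forall i, non_isolated X (c i);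
  index_sep : forall i j, conn X (c i) (c j) -> i = j;
  index_cover : forall x, non_isolated X x -> exists i, conn X (c i) x
}.

Lemma component_index_of_transversal X r :
  component_transversal X (non_isolated X) r -> component_index X {w | In w r} (@proj1_sig _ _).
Proof.
  intros [_ hin hsep hcov]. split.
  - intros [w hw]. apply hin, hw.
  - intros [a ha] [b hb] hab. apply proj1_sig_inj, hsep; assumption.
  - intros x hx. destruct (hcov x hx) as [w hw hwx]. exists (exist _ w hw). exact hwx.
Qed.

Lemma isomorphic_of_relation G' G (R : vert G' -> vert G -> Prop) :
  (forall y, exists x, R y x) -> (forall x, exists y, R y x) ->
  (forall y x x', R y x -> R y x' -> x = x') -> (forall y y' x, R y x -> R y' x -> y = y') ->
  (forall y y' x x', R y x -> R y' x' -> (adj G' y y' <-> adj G x x')) ->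
  isomorphic G' G.
Proof.
  intros htot hsurj hfun hinj hadj. destruct (choice R htot) as [phi hphi].
  exists phi. split; [split|].
  - intros y y' e. apply (hinj y y' (phi y)); [apply hphi | rewrite e; apply hphi].
  - intros y y'. apply hadj; apply hphi.
  - intro x. destruct (hsurj x) as [y hy]. exists y. exact (hfun y _ _ (hphi y) hy).
Qed.

Section Gluing.
Variables (G' G : graph) (I : Type) (c' : I -> vert G') (c : I -> vert G).
Hypothesis hc' : component_index G' I c'.
Hypothesis hc : component_index G I c.
Variable theta : forall i, vert (component G' (c' i)) -> vert (component G (c i)).
Hypothesis theta_iso : forall i, embedding _ _ (theta i) /\ Surjective (theta i).
Variable beta : isolated_vert G' -> isolated_vert G.
Hypothesis beta_inj : Injective beta.
Hypothesis beta_surj : Surjective beta.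

Definition glue_comp (i : I) (y : vert G') (x : vert G) : Prop :=
  exists p, proj1_sig (theta i (exist _ y p)) = x.

Definition glue_isolated (y : vert G') (x : vert G) : Prop :=
  exists q, proj1_sig (beta (exist _ y q)) = x.

Definition glue (y : vert G') (x : vert G) : Prop :=
  (exists i, glue_comp i y x) \/ glue_isolated y x.

Lemma glue_comp_conn i y x : glue_comp i y x -> conn G' (c' i) y /\ conn G (c i) x.
Proof. intros [p <-]. split; [exact p | exact (proj2_sig _)]. Qed.

Lemma glue_comp_non_isolated i y x : glue_comp i y x -> non_isolated G' y /\ non_isolated G x.
Proof.
  intro h. destruct (glue_comp_conn i y x h) as [hy hx]. split.
  - exact (non_isolated_conn _ _ _ (index_non_isolated _ _ _ hc' i) hy).
  - exact (non_isolated_conn _ _ _ (index_non_isolated _ _ _ hc i) hx).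
Qed.

Lemma glue_isolated_isolated y x : glue_isolated y x -> ~ non_isolated G' y /\ ~ non_isolated G x.
Proof. intros [q <-]. split; [exact q | exact (proj2_sig (beta (exist _ y q)))]. Qed.

Lemma glue_total y : exists x, glue y x.
Proof.
  destruct (classic (non_isolated G' y)) as [hy|hy].
  - destruct (index_cover _ _ _ hc' y hy) as [i p]. exists (proj1_sig (theta i (exist _ y p))).
    left. exists i, p. reflexivity.
  - exists (proj1_sig (beta (exist _ y hy))). right. exists hy. reflexivity.
Qed.

Lemma glue_surjective x : exists y, glue y x.
Proof.
  destruct (classic (non_isolated G x)) as [hx|hx].
  - destruct (index_cover _ _ _ hc x hx) as [i p].
    destruct (proj2 (theta_iso i) (exist _ x p)) as [[y p'] e].
    exists y. left. exists i, p'. rewrite e. reflexivity.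
  - destruct (beta_surj (exist _ x hx)) as [[y q] e].
    exists y. right. exists q. rewrite e. reflexivity.
Qed.

Lemma glue_functional y x x' : glue y x -> glue y x' -> x = x'.
Proof.
  intros [[i hi]|hi] [[j hj]|hj].
  - destruct (glue_comp_conn i y x hi) as [hyi _], (glue_comp_conn j y x' hj) as [hyj _].
    pose proof (index_sep _ _ _ hc' i j (conn_trans _ _ _ _ hyi (conn_sym _ _ _ hyj))) as <-.
    destruct hi as [p <-], hj as [p' <-]. rewrite (proof_irrelevance _ p p'). reflexivity.
  - exfalso. apply (proj1 (glue_isolated_isolated y x' hj)).
    exact (proj1 (glue_comp_non_isolated i y x hi)).
  - exfalso. apply (proj1 (glue_isolated_isolated y x hi)).
    exact (proj1 (glue_comp_non_isolated j y x' hj)).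
  - destruct hi as [q <-], hj as [q' <-]. rewrite (proof_irrelevance _ q q'). reflexivity.
Qed.

Lemma glue_injective y y' x : glue y x -> glue y' x -> y = y'.
Proof.
  intros [[i hi]|hi] [[j hj]|hj].
  - destruct (glue_comp_conn i y x hi) as [_ hxi], (glue_comp_conn j y' x hj) as [_ hxj].
    pose proof (index_sep _ _ _ hc i j (conn_trans _ _ _ _ hxi (conn_sym _ _ _ hxj))) as <-.
    destruct hi as [p e], hj as [p' e']. rewrite <- e' in e.
    exact (f_equal (@proj1_sig _ _) (proj1 (proj1 (theta_iso i)) _ _ (proj1_sig_inj _ _ e))).
  - exfalso. apply (proj2 (glue_isolated_isolated y' x hj)).
    exact (proj2 (glue_comp_non_isolated i y x hi)).
  - exfalso. apply (proj2 (glue_isolated_isolated y x hi)).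
    exact (proj2 (glue_comp_non_isolated j y' x hj)).
  - destruct hi as [q e], hj as [q' e']. rewrite <- e' in e.
    exact (f_equal (@proj1_sig _ _) (beta_inj _ _ (proj1_sig_inj _ _ e))).
Qed.

Lemma glue_adj y y' x x' : glue y x -> glue y' x' -> (adj G' y y' <-> adj G x x').
Proof.
  intros [[i hi]|hi] [[j hj]|hj].
  - destruct (classic (i = j)) as [<-|hij].
    + destruct hi as [p <-], hj as [p' <-].
      exact (proj2 (proj1 (theta_iso i)) (exist _ y p) (exist _ y' p')).
    + destruct (glue_comp_conn i y x hi) as [hyi hxi], (glue_comp_conn j y' x' hj) as [hyj hxj].
      split; intro h; exfalso; apply hij.
      * apply (index_sep _ _ _ hc').
        apply (conn_trans _ _ y'); [|exact (conn_sym _ _ _ hyj)].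
        exact (conn_trans _ _ _ _ hyi (conn_of_adj _ _ _ h)).
      * apply (index_sep _ _ _ hc).
        apply (conn_trans _ _ x'); [|exact (conn_sym _ _ _ hxj)].
        exact (conn_trans _ _ _ _ hxi (conn_of_adj _ _ _ h)).
  - destruct (glue_isolated_isolated y' x' hj) as [hy' hx'].
    split; intro h; exfalso; [apply hy' | apply hx']; eexists; apply adj_sym, h.
  - destruct (glue_isolated_isolated y x hi) as [hy hx].
    split; intro h; exfalso; [apply hy | apply hx]; eexists; exact h.
  - destruct (glue_isolated_isolated y' x' hj) as [hy' hx'].
    split; intro h; exfalso; [apply hy' | apply hx']; eexists; apply adj_sym, h.
Qed.

Lemma isomorphic_glue : isomorphic G' G.
Proof.
  exact (isomorphic_of_relation G' G glue
           glue_total glue_surjective glue_functional glue_injective glue_adj).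
Qed.
End Gluing.

Lemma isomorphic_of_components G' G I (c' : I -> vert G') (c : I -> vert G) :
  component_index G' I c' -> component_index G I c ->
  (forall i, isomorphic (component G' (c' i)) (component G (c i))) ->
  equipotent (isolated_vert G') (isolated_vert G) -> isomorphic G' G.
Proof.
  intros hc' hc hcomp [beta [beta' [hbeta hbeta']]].
  set (theta i := epsilon (inhabits (fun _ => exist _ (c i) (conn_refl G (c i))))
                          (fun t : vert (component G' (c' i)) -> vert (component G (c i)) =>
                             embedding _ _ t /\ Surjective t)).
  apply (isomorphic_glue G' G I c' c hc' hc theta (fun i => epsilon_spec _ _ (hcomp i)) beta).
  - intros a b e. rewrite <- (hbeta a), <- (hbeta b), e. reflexivity.
  - intro x. exists (beta' x). apply hbeta'.
Qed.

(** * Siblings of a graph with rigid components *)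

Section RigidSibling.
Variables (G G' : graph) (f : vert G -> vert G') (g : vert G' -> vert G).
Hypothesis Hf : embedding G G' f.
Hypothesis Hg : embedding G' G g.
Hypothesis Hrigid : forall (v : vert G) (H' : graph),
  connected H' -> equimorphic H' (component G v) -> isomorphic H' (component G v).
Variables (I : Type) (c : I -> vert G).
Hypothesis HI : Finite I.
Hypothesis Hc : component_index G I c.
Hypothesis Hno_component : forall C, connected C -> (exists v, non_isolated C v) -> ~ absorbs G C.
Hypothesis Hno_isolated : ~ absorbs G (edgeless (isolated_vert G + unit)).

Lemma embedding_hits_components G2 e e2 :
  embedding G G2 e -> embedding G2 G e2 ->
  forall y, non_isolated G2 y -> exists i, conn G2 (e (c i)) y.
Proof.
  intros he he2 y hy. apply NNPP. intro hmiss.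
  apply (Hno_component (component G2 y) (component_connected G2 y)
           (ex_intro _ _ (non_isolated_component G2 y hy))).
  apply (absorbs_missed_component G G2 e e2 y he he2 hy).
  intros x hx hxy. destruct (index_cover _ _ _ Hc x hx) as [i hi]. apply hmiss. exists i.
  exact (conn_trans _ _ _ _ (conn_embedding _ _ _ _ _ he hi) hxy).
Qed.

Lemma self_embedding_permutes_components :
  exists s : I -> I, (forall i, conn G (g (f (c i))) (c (s i))) /\ Injective s /\ Surjective s.
Proof.
  pose proof (embedding_comp _ _ _ _ _ Hf Hg) as Hh.
  destruct (choice (fun i j => conn G (g (f (c i))) (c j))) as [s hs].
  { intro i. destruct (index_cover _ _ _ Hc (g (f (c i)))) as [j hj].
    - exact (non_isolated_embedding _ _ _ _ Hh (index_non_isolated _ _ _ Hc i)).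
    - exists j. exact (conn_sym _ _ _ hj). }
  assert (hsurj : Surjective s).
  { intro j. destruct (embedding_hits_components G _ _ Hh (embedding_id G) (c j)
                         (index_non_isolated _ _ _ Hc j)) as [i hi].
    exists i. apply (index_sep _ _ _ Hc). exact (conn_trans _ _ _ _ (conn_sym _ _ _ (hs i)) hi). }
  exists s. split; [exact hs|]. split; [|exact hsurj].
  apply (Endo_Injective_Surjective HI (fun i j => classic (i = j))), hsurj.
Qed.

Lemma sibling_component_equimorphic i :
  equimorphic (component G' (f (c i))) (component G (c i)).
Proof.
  destruct self_embedding_permutes_components as [s [hs [_ hsurj]]].
  split; [|exact (embeds_component _ _ _ _ _ Hf (conn_refl _ _))].
  apply embeds_trans with (component G (c (s i))).
  { exact (embeds_component _ _ _ _ _ Hg (hs i)). }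
  assert (hstep : forall j, embeds (component G (c j)) (component G (c (s j))))
    by (intro j; exact (embeds_component _ _ _ _ _ (embedding_comp _ _ _ _ _ Hf Hg) (hs j))).
  destruct (surjective_periodic I s HI hsurj i) as [n hn].
  pose proof (embeds_iterate I (fun j => component G (c j)) s hstep n (s i)) as hback.
  rewrite hn in hback. exact hback.
Qed.

Lemma sibling_component_index : component_index G' I (fun i => f (c i)).
Proof.
  destruct self_embedding_permutes_components as [s [hs [hinj _]]]. split.
  - intro i. exact (non_isolated_embedding _ _ _ _ Hf (index_non_isolated _ _ _ Hc i)).
  - intros i j hij. apply hinj, (index_sep _ _ _ Hc).
    pose proof (conn_embedding _ _ _ _ _ Hg hij) as hg.
    exact (conn_trans _ _ _ _ (conn_sym _ _ _ (hs i)) (conn_trans _ _ _ _ hg (hs j))).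
  - intros y hy. exact (embedding_hits_components G' f g Hf Hg y hy).
Qed.

Lemma sibling_isolated_equipotent : equipotent (isolated_vert G') (isolated_vert G).
Proof.
  assert (hGG' : injects (isolated_vert G) (isolated_vert G'))
    by exact (isolated_injects G G G' (fun x => x) f g (embedding_id G) Hf Hg Hno_isolated).
  apply equipotent_of_injects; [|exact hGG'].
  apply (isolated_injects G G' G f g (fun x => x) Hf Hg (embedding_id G)).
  intro habs. apply Hno_isolated. refine (absorbs_edgeless_injects G _ _ _ habs).
  apply injects_sum; [exact hGG' | apply injects_refl].
Qed.

Lemma rigid_sibling_isomorphic : isomorphic G' G.
Proof.
  apply (isomorphic_of_components G' G I (fun i => f (c i)) c sibling_component_index Hc).
  - intro i. apply Hrigid; [apply component_connected | apply sibling_component_equimorphic].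
  - exact sibling_isolated_equipotent.
Qed.
End RigidSibling.

Theorem lemma2p1 (G : graph) :
  disconnected G ->
  fin_many_nontrivial_comps G ->
  (forall v : vert G, forall H' : graph,
      connected H' -> equimorphic H' (component G v) ->
      isomorphic H' (component G v)) ->
  (exists F : nat -> graph,
      (forall n, sibling (F n) G /\ disconnected (F n)) /\
      (forall i j, i <> j -> ~ isomorphic (F i) (F j)))
  \/ (forall G' : graph, sibling G' G -> isomorphic G' G).
Proof.
  intros _ [l hl] Hrigid.
  destruct (classic (many_disconnected_siblings G)) as [Hmany|Hfew]; [left; exact Hmany|right].
  destruct (transversal_exists G (non_isolated G) l (non_isolated_conn G)) as [r hr].
  { intros v hv. destruct (hl v (nontrivial_comp_of_non_isolated G v hv)) as [w [hw hwv]].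
    exists w; assumption. }
  intros G' [[g Hg] [f Hf]].
  apply (rigid_sibling_isomorphic G G' f g Hf Hg Hrigid _ _ (finite_In r)
           (component_index_of_transversal G r hr)).
  - intros C hC hv hGC. exact (Hfew (many_siblings_of_absorbed_component G C r hr hC hv hGC)).
  - intro habs. exact (Hfew (many_siblings_of_absorbed_isolated G habs)).
Qed.
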